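(* Let $n\ge 10$ be even, $K_n=(V,E)$ the complete graph, and $M_1,M_2$ two different perfect matchings in $K_n$. Then $\bm{c}=\chi(M_1)-\chi(M_2)$ is a circuit of the Perfect Matching polytope $P_{\mathrm{perfmatch}}(n)=\operatorname{conv}\{\chi(M): M\text{ a perfect matching in }K_n\}$, with circuits taken with respect to the linear description $$\bm{x}(\delta(S))\ge 1\ \text{for all } S\subset V,\ |S|\text{ odd},\ |S|\ge 3;\quad \bm{x}(\delta(v))=1\ \text{for all } v\in V;\quad \bm{x}\ge\bm{0}.$$
   Context: $\chi(M)\in\{0,1\}^E$ is the characteristic vector of $M$; $\delta(S)$ is the set of edges with exactly one endpoint in $S$, $\delta(v)=\delta(\{v\})$, $\bm{x}(F)=\sum_{e\in F}x_e$. Circuits: for a polytope $P=\{\bm{x}: A\bm{x}=\bm{b},\ B\bm{x}\le \bm{d}\}$ given by a fixed linear system, a nonzero vector $\bm{g}$ is a circuit of $P$ if $A\bm{g}=\bm{0}$ and $\operatorname{supp}(B\bm{g})$ is inclusion-minimal among the sets $\operatorname{supp}(B\bm{y})$ with $A\bm{y}=\bm{0}$, $\bm{y}\neq\bm{0}$. *)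

From mathcomp Require Import all_boot all_order all_algebra.
From mathcomp Require Import reals.
Set Implicit Arguments. Unset Strict Implicit. Unset Printing Implicit Defensive.
Import Order.TTheory GRing.Theory Num.Theory.
Local Open Scope ring_scope.

Definition edge (n : nat) := {e : {set 'I_n} | #|e| == 2%N}.

Definition delta (n : nat) (S : {set 'I_n}) : {set edge n} :=
  [set e : edge n | #|val e :&: S| == 1%N].

Definition deltav (n : nat) (v : 'I_n) : {set edge n} := delta [set v].

Definition xsum (R : realType) (n : nat) (x : edge n -> R) (F : {set edge n}) : R :=
  \sum_(e in F) x e.

Definition perfect_matching (n : nat) (M : {set edge n}) : Prop :=
  forall v : 'I_n, #|[set e in M | v \in val e]| = 1%N.

Definition chi (R : realType) (n : nat) (M : {set edge n}) : edge n -> R :=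
  fun e => if e \in M then 1 else 0.

(* Index set of the inequality rows B x <= d:
   inl S : odd-set constraint  x(delta S) >= 1  (S odd, |S| >= 3),
   inr e : nonnegativity x_e >= 0. *)
Definition ineq_row (n : nat) := ({set 'I_n} + edge n)%type.

Definition valid_row (n : nat) (i : ineq_row n) : bool :=
  match i with
  | inl A => odd #|A| && (3 <= #|A|)%N
  | inr _ => true
  end.

(* (B y)_i up to the sign of the row (irrelevant for the support). *)
Definition Brow (R : realType) (n : nat) (y : edge n -> R) (i : ineq_row n) : R :=
  match i with
  | inl A => xsum y (delta A)
  | inr e => y e
  end.

Definition Bsupp (R : realType) (n : nat) (y : edge n -> R) : {set ineq_row n} :=
  [set i : ineq_row n | valid_row i && (Brow y i != 0)].

(* A y = 0 : the degree equalities x(delta(v)) = 1 for all v. *)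
Definition in_kerA (R : realType) (n : nat) (y : edge n -> R) : Prop :=
  forall v : 'I_n, xsum y (deltav v) = 0.

Definition nonzero (R : realType) (n : nat) (y : edge n -> R) : Prop :=
  exists e : edge n, y e != 0.

Definition is_circuit (R : realType) (n : nat) (g : edge n -> R) : Prop :=
  [/\ in_kerA g, nonzero g &
      forall y : edge n -> R, in_kerA y -> nonzero y ->
        Bsupp y \subset Bsupp g -> Bsupp y = Bsupp g].

From mathcomp Require Import all_boot all_order all_algebra.
From mathcomp Require Import reals.
Import Order.TTheory GRing.Theory Num.Theory.
Set Implicit Arguments. Unset Strict Implicit. Unset Printing Implicit Defensive.
Local Open Scope ring_scope.

(* Let c = chi M1 - chi M2 and let y be a nonzero kernel vector whose B-support
   lies in that of c.  The nonnegativity rows make y vanish off the symmetric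
   difference, so at each vertex v the degree equation reads
   y (m1 v) + y (m2 v) = 0, where m_i v is the edge of M_i covering v; hence
   v |-> y (m1 v) is constant along every edge of M1 :|: M2.  If it took
   different values at two vertices a, b where the matchings differ, then the
   M2-edge at a, the M1-edge at b and one vertex w that is not matched to them
   (it exists as n >= 9) would form a 5-set S whose only M1 :|: M2 edges are
   these two.  For kernel vectors x(delta S) = -2 x(E(S)), so c(delta S) = 0,
   hence y(delta S) = 0, which forces the two values to agree.  Thus y is a
   nonzero multiple of c and has the same B-support. *)

Section Edges.
Variable n : nat.
Implicit Types (e f : edge n) (S : {set 'I_n}).

Lemma card_edge e : #|val e| = 2%N.
Proof. exact: eqP (valP e). Qed.

Lemma edge_set2 e : exists x y, x != y /\ val e = [set x; y].
Proof. by apply/cards2P; rewrite card_edge. Qed.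

Lemma edge_end e : exists x, x \in val e.
Proof. by apply/card_gt0P; rewrite card_edge. Qed.

Lemma edge_other_end e w : exists2 t, t \in val e & t != w.
Proof.
have [x [y [xy ->]]] := edge_set2 e.
case: (eqVneq x w) => [<-|xw]; last by exists x; rewrite ?inE ?eqxx.
by exists y; rewrite ?inE ?eqxx ?orbT // eq_sym.
Qed.

Lemma edge_subset_inj e f : val e \subset val f -> e = f.
Proof. by move=> sef; apply/val_inj/eqP; rewrite eqEcard sef !card_edge. Qed.

Lemma in_deltav v e : (e \in deltav v) = (v \in val e).
Proof.
rewrite inE; have [ve|ve] := boolP (v \in val e).
  by rewrite (setIidPr _) ?cards1 // sub1set.
suff -> : val e :&: [set v] = set0 by rewrite cards0.
by apply/eqP; rewrite setI_eq0 disjoint_sym disjoints1.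
Qed.

Definition induced_edges S : {set edge n} := [set e : edge n | val e \subset S].

Lemma sum_xsum_deltav (R : realType) (z : edge n -> R) S :
  \sum_(v in S) xsum z (deltav v) =
  xsum z (delta S) + 2 * xsum z (induced_edges S).
Proof.
have -> : \sum_(v in S) xsum z (deltav v) = \sum_e z e *+ #|val e :&: S|.
  rewrite /xsum (exchange_big_dep predT) //=; apply: eq_bigr => e _.
  rewrite -sumr_const; apply: eq_bigl => v.
  by rewrite in_deltav !inE andbC.
rewrite /xsum mulr_sumr [\sum_(e in delta S) _]big_mkcond.
rewrite [\sum_(e in induced_edges S) _]big_mkcond -big_split /=.
apply: eq_bigr => e _.
have inducedE : (e \in induced_edges S) = (#|val e :&: S| == 2%N).
  rewrite inE; apply/idP/eqP => [eS|eS2]; first by rewrite (setIidPl eS) card_edge.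
  by apply/setIidPl/eqP; rewrite eqEcard subsetIl eS2 card_edge.
have : (#|val e :&: S| <= 2)%N.
  by rewrite (leq_trans (subset_leq_card (subsetIl _ S))) ?card_edge.
rewrite inE inducedE; case: #|_| => [|[|[|k]]] //= _.
- by rewrite addr0.
- by rewrite addr0.
- by rewrite add0r mulr_natl.
Qed.

Lemma kerA_xsum_delta (R : realType) (z : edge n -> R) S : in_kerA z ->
  xsum z (delta S) = - 2 * xsum z (induced_edges S).
Proof.
move=> zker; have := sum_xsum_deltav z S.
by rewrite big1 // => /esym /eqP; rewrite addr_eq0 mulNr => /eqP.
Qed.

End Edges.

Lemma Bsupp_subset_row (R : realType) n (g y : edge n -> R) i :
  Bsupp y \subset Bsupp g -> valid_row i -> Brow g i = 0 -> Brow y i = 0.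
Proof.
move=> sub vi gi; apply/eqP/negPn/negP => yi.
by have := subsetP sub i; rewrite !inE vi yi gi eqxx => /(_ isT).
Qed.

Lemma Bsupp_scale (R : realType) n (g y : edge n -> R) mu :
  mu != 0 -> (forall e, y e = mu * g e) -> Bsupp y = Bsupp g.
Proof.
move=> mu0 yE; apply/setP => i; rewrite !inE.
have -> : Brow y i = mu * Brow g i.
  case: i => [S|e] /=; last exact: yE.
  by rewrite /xsum mulr_sumr; apply: eq_bigr => e _.
by rewrite mulf_eq0 negb_or mu0.
Qed.

Definition matching_map n (M : {set edge n}) (m : 'I_n -> edge n) :=
  forall (v : 'I_n) (e : edge n), (e \in M) && (v \in val e) = (e == m v).

Lemma perfect_matching_map n (M : {set edge n}) :
  perfect_matching M -> exists m, matching_map M m.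
Proof.
move=> pM.
suff /fin_all_exists [m mM] : forall v, exists e : edge n,
    forall f, (f \in M) && (v \in val f) = (f == e) by exists m.
move=> v; have /cards1P [e Me] := introT eqP (pM v).
by exists e => f; rewrite -in_set1 -Me inE.
Qed.

Section MatchingMap.
Variables (n : nat) (M : {set edge n}) (m : 'I_n -> edge n).
Hypothesis mM : matching_map M m.
Implicit Types (v : 'I_n) (e : edge n).

Lemma matching_map_mem v : m v \in M.
Proof. by have := mM v (m v); rewrite eqxx => /andP []. Qed.

Lemma matching_map_end v : v \in val (m v).
Proof. by have := mM v (m v); rewrite eqxx => /andP []. Qed.

Lemma matching_map_uniq v e : e \in M -> v \in val e -> e = m v.
Proof. by move=> Me ve; apply/eqP; rewrite -mM Me. Qed.

Lemma matching_map_notin v e : v \in val e -> e != m v -> e \notin M.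
Proof. by move=> ve; apply: contra => Me; rewrite -mM Me. Qed.

Lemma matching_mapE : M = [set m v | v : 'I_n].
Proof.
apply/setP => e; apply/idP/imsetP => [Me|[v _ ->]]; last exact: matching_map_mem.
by have [x xe] := edge_end e; exists x => //; apply: matching_map_uniq.
Qed.

Lemma xsum_chi_deltav (R : realType) v : xsum (chi R M) (deltav v) = 1.
Proof.
rewrite /xsum (bigD1 (m v)) ?in_deltav ?matching_map_end //=.
rewrite /chi matching_map_mem big1 ?addr0 // => e /andP [ve ne].
by rewrite in_deltav in ve; rewrite (negbTE (matching_map_notin ve ne)).
Qed.

End MatchingMap.

Lemma matching_union_edge_subset n (M M' : {set edge n}) m m' e' u u' e x :
  matching_map M m -> matching_map M' m' -> e' \in M' -> val e' = [set u; u'] ->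
  e \in M :|: M' -> x \in val e' -> x \in val e ->
  val e \subset val (m u) :|: val (m u').
Proof.
move=> hM hM' M'e' e'E /setUP [Me|M'e] xe' xe.
  rewrite (matching_map_uniq hM Me xe).
  by move: xe'; rewrite e'E !inE => /orP [] /eqP ->; rewrite ?subsetUl ?subsetUr.
rewrite (matching_map_uniq hM' M'e xe) -(matching_map_uniq hM' M'e' xe') e'E.
apply/subsetP => t; rewrite !inE => /orP [] /eqP ->.
  by rewrite (matching_map_end hM).
by rewrite (matching_map_end hM) orbT.
Qed.

Section TwoMatchings.
Variables (n : nat) (M1 M2 : {set edge n}) (m1 m2 : 'I_n -> edge n).
Hypotheses (h1 : matching_map M1 m1) (h2 : matching_map M2 m2).
Implicit Types (e : edge n) (S : {set 'I_n}) (a b v w x z : 'I_n).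

Lemma matching_maps_neq : M1 != M2 -> exists a, m1 a != m2 a.
Proof.
move=> M12; apply/existsP; apply: contraNT M12 => /existsPn m12.
rewrite (matching_mapE h1) (matching_mapE h2); apply/eqP/eq_imset => v.
exact/eqP/negPn/m12.
Qed.

Lemma chi_diff_kerA (R : realType) : in_kerA (fun e => chi R M1 e - chi R M2 e).
Proof.
move=> v; have := xsum_chi_deltav h1 R v; have := xsum_chi_deltav h2 R v.
by rewrite /xsum sumrB => -> ->; rewrite subrr.
Qed.

Lemma exists_far_vertex eA eB : (8 < n)%N -> eA \in M2 -> eB \in M1 ->
  exists w, forall e x, e \in M1 :|: M2 -> x \in val e ->
    x \in val eA :|: val eB -> w \notin val e.
Proof.
move=> n8 eAM2 eBM1.
have [u [u' [_ eAE]]] := edge_set2 eA; have [v [v' [_ eBE]]] := edge_set2 eB.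
set X := (val (m1 u) :|: val (m1 u')) :|: (val (m2 v) :|: val (m2 v')).
have [w wX] : exists w, w \notin X.
  have cardX : (#|X| < n)%N.
    apply: leq_ltn_trans n8; apply: leq_trans (leq_card_setU _ _) _.
    have card_setU_edges (e f : edge n) : (#|val e :|: val f| <= 4)%N.
      by rewrite (leq_trans (leq_card_setU _ _)) ?card_edge.
    by rewrite -[8%N]/(4 + 4)%N leq_add ?card_setU_edges.
  have /card_gt0P [w] : (0 < #|~: X|)%N by rewrite -(ltn_add2l #|X|) cardsC card_ord addn0.
  by rewrite inE; exists w.
exists w => e x eM xe /setUP [xA|xB]; apply: contra wX => we; rewrite inE.
  by rewrite (subsetP (matching_union_edge_subset h1 h2 eAM2 eAE eM xA xe)).
rewrite setUC in eM.
by rewrite (subsetP (matching_union_edge_subset h2 h1 eBM1 eBE eM xB xe)) ?orbT.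
Qed.

Section TightOddSet.
Variables (eA eB : edge n) (w : 'I_n).
Hypotheses (eA_M2 : eA \in M2) (eB_M1 : eB \in M1).
Hypothesis separated : forall e x z, e \in M1 :|: M2 ->
  x \in val e -> z \in val e -> x \in val eA -> z \notin val eB.
Hypothesis far_w : forall e x, e \in M1 :|: M2 -> x \in val e ->
  x \in val eA :|: val eB -> w \notin val e.

Let S := w |: (val eA :|: val eB).

Let eA_M12 : eA \in M1 :|: M2. Proof. by rewrite inE eA_M2 orbT. Qed.
Let eB_M12 : eB \in M1 :|: M2. Proof. by rewrite inE eB_M1. Qed.

Lemma card_tight_set : #|S| = 5%N.
Proof.
have [x xA] := edge_end eA; have [y yB] := edge_end eB.
have wA := far_w eA_M12 xA (introT setUP (or_introl xA)).
have wB := far_w eB_M12 yB (introT setUP (or_intror yB)).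
have AB0 : val eA :&: val eB = set0.
  apply/setP => t; rewrite !inE; case tA: (t \in val eA) => //=.
  exact/negbTE/(separated eA_M12 tA tA tA).
by rewrite cardsU1 inE (negbTE wA) (negbTE wB) cardsU AB0 cards0 !card_edge.
Qed.

Lemma induced_union_edges e : e \in M1 :|: M2 -> val e \subset S -> e = eA \/ e = eB.
Proof.
move=> eM eS.
have wNe : w \notin val e.
  apply/negP => we; have [t te tw] := edge_other_end e w.
  have : t \in val eA :|: val eB by move: (subsetP eS t te); rewrite in_setU1 (negbTE tw).
  by move/(far_w eM te); rewrite we.
have eAB z : z \in val e -> z \in val eA :|: val eB.
  move=> ze; move: (subsetP eS z ze); rewrite in_setU1.
  by case: eqP => [wz|//]; rewrite -wz ze in wNe.
have [x xe] := edge_end e.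
case/setUP: (eAB x xe) => [xA|xB]; [left|right]; apply/edge_subset_inj/subsetP => z ze.
  by case/setUP: (eAB z ze) => // zB; move: (separated eM xe ze xA); rewrite zB.
by case/setUP: (eAB z ze) => // zA; move: (separated eM ze xe zA); rewrite xB.
Qed.

Lemma xsum_induced_tight (R : realType) (z : edge n -> R) :
  (forall e, e \notin M1 :|: M2 -> z e = 0) ->
  xsum z (induced_edges S) = z eA + z eB.
Proof.
move=> z_off.
have [x xA] := edge_end eA.
have eAB : eA != eB by apply: contraNneq (separated eA_M12 xA xA xA) => <-.
have subS (f : edge n) : val f \subset val eA :|: val eB -> f \in induced_edges S.
  by move=> fAB; rewrite inE (subset_trans fAB) ?subsetUr.
rewrite /xsum (big_setD1 eA) ?subS ?subsetUl //= (big_setD1 eB) /=; last first.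
  by rewrite in_setD1 eq_sym eAB subS ?subsetUr.
rewrite big1 ?addr0 // => e; rewrite !in_setD1 => /and3P [eB' eA' eS].
rewrite inE in eS; apply: z_off; apply/negP => eM.
by case: (induced_union_edges eM eS) => eE; [move: eA' | move: eB']; rewrite eE eqxx.
Qed.

End TightOddSet.

Lemma exists_tight_odd_set eA eB : (8 < n)%N -> eA \in M2 -> eB \in M1 ->
  (forall e x z, e \in M1 :|: M2 ->
     x \in val e -> z \in val e -> x \in val eA -> z \notin val eB) ->
  exists S, [/\ odd #|S|, (3 <= #|S|)%N &
    forall (R : realType) (z : edge n -> R), (forall e, e \notin M1 :|: M2 -> z e = 0) ->
      xsum z (induced_edges S) = z eA + z eB].
Proof.
move=> n8 eA_M2 eB_M1 separated.
have [w far_w] := exists_far_vertex n8 eA_M2 eB_M1.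
exists (w |: (val eA :|: val eB)).
rewrite (card_tight_set eA_M2 eB_M1 separated far_w); split=> // R z.
exact: xsum_induced_tight.
Qed.

Section KernelVector.
Variables (R : realType) (y : edge n -> R).
Let c (e : edge n) : R := chi R M1 e - chi R M2 e.
Hypotheses (y_ker : in_kerA y) (y_supp : Bsupp y \subset Bsupp c).

Let c_off e : e \notin M1 :|: M2 -> c e = 0.
Proof. by rewrite inE negb_or /c /chi => /andP [/negbTE -> /negbTE ->]; rewrite subrr. Qed.

Lemma y_off_support e : c e = 0 -> y e = 0.
Proof. exact: (Bsupp_subset_row (i := inr e) y_supp). Qed.

Lemma y_odd_cut S : odd #|S| -> (3 <= #|S|)%N ->
  xsum c (delta S) = 0 -> xsum y (delta S) = 0.
Proof. by move=> oS S3; apply: (Bsupp_subset_row (i := inl S) y_supp); rewrite /= oS S3. Qed.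

Lemma y_mates_sum v : y (m1 v) + y (m2 v) = 0.
Proof.
case: (eqVneq (m1 v) (m2 v)) => [m12|m12].
  rewrite -m12 [y _]y_off_support ?add0r // /c /chi.
  by rewrite (matching_map_mem h1) m12 (matching_map_mem h2) subrr.
have := y_ker v; rewrite /xsum (bigD1 (m1 v)) ?in_deltav ?(matching_map_end h1) //=.
rewrite (bigD1 (m2 v)) /= ?in_deltav ?(matching_map_end h2) 1?eq_sym ?m12 //.
rewrite big1 ?addr0 // => e /andP [/andP [ve e1] e2]; rewrite in_deltav in ve.
apply: y_off_support; rewrite /c /chi.
by rewrite (negbTE (matching_map_notin h1 ve e1)) (negbTE (matching_map_notin h2 ve e2)) subrr.
Qed.

Lemma y_m1_edge e x z : e \in M1 :|: M2 -> x \in val e -> z \in val e ->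
  y (m1 x) = y (m1 z).
Proof.
case/setUP => eM xe ze.
  by rewrite -(matching_map_uniq h1 eM xe) -(matching_map_uniq h1 eM ze).
apply: (addIr (y e)); rewrite {1}(matching_map_uniq h2 eM xe) y_mates_sum.
by rewrite (matching_map_uniq h2 eM ze) y_mates_sum.
Qed.

Lemma y_m1_const a b : (8 < n)%N -> m1 a != m2 a -> m1 b != m2 b -> y (m1 a) = y (m1 b).
Proof.
move=> n8 na nb; case: (eqVneq (y (m1 a)) (y (m1 b))) => // yab.
have eA_M2 := matching_map_mem h2 a; have eB_M1 := matching_map_mem h1 b.
have y_eA x : x \in val (m2 a) -> y (m1 x) = y (m1 a).
  by move=> xA; apply: (y_m1_edge _ xA (matching_map_end h2 a)); rewrite inE eA_M2 orbT.
have y_eB x : x \in val (m1 b) -> y (m1 x) = y (m1 b).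
  by move=> xB; apply: (y_m1_edge _ xB (matching_map_end h1 b)); rewrite inE eB_M1.
have separated e x z : e \in M1 :|: M2 -> x \in val e -> z \in val e ->
    x \in val (m2 a) -> z \notin val (m1 b).
  move=> eM xe ze xA; apply: contraNN yab => zB.
  by rewrite -(y_eA x xA) -(y_eB z zB) (y_m1_edge eM xe ze).
have [S [oS S3 xsum_S]] := exists_tight_odd_set n8 eA_M2 eB_M1 separated.
have eA_M1 : m2 a \notin M1.
  by apply: (matching_map_notin h1 (matching_map_end h2 a)); rewrite eq_sym.
have eB_M2 : m1 b \notin M2 := matching_map_notin h2 (matching_map_end h1 b) nb.
have cut_c : xsum c (delta S) = 0.
  rewrite kerA_xsum_delta; last exact: chi_diff_kerA.
  rewrite xsum_S // /c /chi eA_M2 eB_M1 (negbTE eA_M1) (negbTE eB_M2).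
  by rewrite sub0r subr0 addNr mulr0.
have := y_odd_cut oS S3 cut_c; rewrite kerA_xsum_delta // xsum_S => [|e /c_off]; last first.
  exact: y_off_support.
move=> /eqP; rewrite mulf_eq0 oppr_eq0 pnatr_eq0 orFb addr_eq0 => /eqP yA.
by have := y_mates_sum a; rewrite yA => /eqP; rewrite subr_eq0 => /eqP.
Qed.

Lemma y_proportional a : (8 < n)%N -> m1 a != m2 a -> forall e, y e = y (m1 a) * c e.
Proof.
move=> n8 na e; have [x xe] := edge_end e.
case: (boolP (e \in M1)) => e1; case: (boolP (e \in M2)) => e2.
- by rewrite /c /chi e1 e2 subrr mulr0 y_off_support // /c /chi e1 e2 subrr.
- rewrite (matching_map_uniq h1 e1 xe) in e2 *.
  rewrite /c /chi (matching_map_mem h1) (negbTE e2) subr0 mulr1.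
  apply: y_m1_const n8 _ na; apply: contraNneq e2 => ->; exact: matching_map_mem h2 x.
- rewrite (matching_map_uniq h2 e2 xe) in e1 *.
  rewrite /c /chi (matching_map_mem h2) (negbTE e1) sub0r mulrN1.
  rewrite -(@y_m1_const x a n8 _ na); first by apply/eqP; rewrite -addr_eq0 addrC y_mates_sum.
  by apply: contraNneq e1 => <-; exact: matching_map_mem h1 x.
- by rewrite y_off_support ?c_off ?mulr0 // inE negb_or e1.
Qed.

End KernelVector.

End TwoMatchings.

Theorem lemma5 (R : realType) (n : nat) (M1 M2 : {set edge n}) :
  ~~ odd n -> (10 <= n)%N ->
  perfect_matching M1 -> perfect_matching M2 -> M1 != M2 ->
  is_circuit (fun e : edge n => chi R M1 e - chi R M2 e).
Proof.
(* Evenness of n already follows from the existence of a perfect matching. *)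
move=> _ n10 /perfect_matching_map [m1 h1] /perfect_matching_map [m2 h2] M12.
have n8 : (8 < n)%N by apply: leq_trans n10.
have [a na] := matching_maps_neq h1 h2 M12.
split; first exact: chi_diff_kerA.
  exists (m1 a); rewrite /chi (matching_map_mem h1).
  by rewrite (negbTE (matching_map_notin h2 (matching_map_end h1 a) na)) subr0 oner_neq0.
move=> y y_ker [e ye] y_supp.
have yE := y_proportional h1 h2 y_ker y_supp n8 na.
apply: (Bsupp_scale _ yE); apply: contraNneq ye => y0.
by rewrite yE y0 mul0r.
Qed.
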